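(* Let $f$ be a Riemann-integrable function on $[0,1]$, let $L=\int_0^1f(x)\,dx$, and for $\varepsilon>0$ define \[D=\{x\in[0,1]: f(x)<0\},\qquad L_\varepsilon=\{x\in[0,1]: f(x)\in[0,L+\varepsilon]\}.\] Then at least one of the following holds: (i) $\left|\int_Df(x)\,dx\right|\ge\frac\varepsilon2$; (ii) $\mu(L_\varepsilon\cup D)\ge\frac{\varepsilon}{2(L+\varepsilon)}$, where $\mu$ denotes Lebesgue measure. *)

From Stdlib Require Import Reals.
From HB Require Import structures.
From mathcomp Require Import all_boot all_order all_algebra.
From mathcomp Require Import all_classical all_reals all_analysis.
From mathcomp Require Import Rstruct Rstruct_topology.
Set Implicit Arguments. Unset Strict Implicit. Unset Printing Implicit Defensive.
Import Order.TTheory GRing.Theory Num.Theory.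
Import numFieldNormedType.Exports.
Local Open Scope classical_set_scope.
Local Open Scope ring_scope.

Definition negset (f : R -> R) : set R :=
  [set x : R | x \in `[0%R, 1%R] /\ f x < 0].

Definition levelset (f : R -> R) (L eps : R) : set R :=
  [set x : R | x \in `[0%R, 1%R] /\ f x \in `[0%R, L + eps]].

(* Write K = L + eps, so that L_eps ∪ D contains S = {x ∈ [0,1] : f x <= K}.
   Take a step function u >= f on [0,1] whose integral is close to L and split
   its integral as P - N into the contributions of its positive and negative
   values.  On [0,1], off S and the finitely many subdivision points, u > K, so
   P >= K (1 - μ(S)); where u takes a negative value c we have f <= c < 0, so
   N <= |∫_D f|.  Hence K (1 - μ(L_eps ∪ D)) - |∫_D f| <= L, and
   μ(L_eps ∪ D) < eps / (2K) forces |∫_D f| > eps / 2. *)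

From Stdlib Require Import Reals.
From HB Require Import structures.
From mathcomp Require Import all_boot all_order all_algebra.
From mathcomp Require Import all_classical all_reals all_analysis.
From mathcomp Require Import Rstruct Rstruct_topology measurable_realfun.
From Stdlib Require Import Lra Lia RList RiemannInt_SF RiemannInt.
Import Order.TTheory GRing.Theory Num.Theory.
Import numFieldNormedType.Exports.
Local Open Scope classical_set_scope.
Local Open Scope ring_scope.

Definition Rgt_ind (K c : R) : R := (K < c)%R%:R.

Section Int_SF_map.
Local Open Scope R_scope.

Lemma ordered_Rlist_cons x y s :
  ordered_Rlist [:: x, y & s] -> x <= y /\ ordered_Rlist (y :: s).
Proof. by move=> ord; split; [apply: (ord 0%nat); simpl; lia | exact: RList_P4 ord]. Qed.

Lemma Int_SF_mapB (g h : R -> R) lf l :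
  Int_SF (map (fun c => g c - h c) lf) l = Int_SF (map g lf) l - Int_SF (map h lf) l.
Proof. by elim: lf l => [|c lf IH] [|x [|y s]] /=; rewrite ?IH; ring. Qed.

Lemma Int_SF_mapZ (k : R) (g : R -> R) lf l :
  Int_SF (map (fun c => k * g c) lf) l = k * Int_SF (map g lf) l.
Proof. by elim: lf l => [|c lf IH] [|x [|y s]] /=; rewrite ?IH; ring. Qed.

Lemma Int_SF_map_le (g h : R -> R) lf l : (forall c, g c <= h c) ->
  ordered_Rlist l -> Int_SF (map g lf) l <= Int_SF (map h lf) l.
Proof.
move=> gh; elim: lf l => [|c lf IH] [|x [|y s]] //=; try lra.
move=> /ordered_Rlist_cons [xy ord]; have := IH _ ord; have := gh c; nra.
Qed.

Lemma Int_SF_pos_neg lf l : Int_SF lf l =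
  Int_SF (map (fun c => Rmax c 0) lf) l - Int_SF (map (fun c => Rmax (- c) 0) lf) l.
Proof.
rewrite -Int_SF_mapB -[lf in LHS]map_id; congr Int_SF; apply: eq_map => c /=.
by rewrite /Rmax; case: Rle_dec => ?; case: Rle_dec => ?; lra.
Qed.

Lemma Int_SF_Rgt_ind_le K lf l : 0 <= K -> ordered_Rlist l ->
  K * Int_SF (map (Rgt_ind K) lf) l <= Int_SF (map (fun c => Rmax c 0) lf) l.
Proof.
move=> K0 ord; rewrite -Int_SF_mapZ; apply: Int_SF_map_le => // c.
apply/RleP; rewrite RmultE RmaxE /Rgt_ind; case: ltP => Kc.
  by rewrite mulr1 le_max (ltW Kc).
by rewrite mulr0 le_max lexx orbT.
Qed.

End Int_SF_map.

Section step_lists.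
Local Open Scope R_scope.

Fixpoint step_superlevel (K : R) (lf l : list R) : set R :=
  match lf, l with
  | c :: lf', x :: ((y :: _) as l') =>
    (if (K < c)%R then `]x, y[%classic else set0) `|` step_superlevel K lf' l'
  | _, _ => set0
  end.

Variable f : R -> R.

Fixpoint step_majorant (lf l : list R) : Prop :=
  match lf, l with
  | [::], [:: _] => True
  | c :: lf', x :: ((y :: _) as l') =>
    (forall t, x < t < y -> 0 <= t <= 1 /\ f t <= c) /\ step_majorant lf' l'
  | _, _ => False
  end.

Lemma step_majorant_adapted lf l : length l = S (length lf) ->
  (forall i, (i < Nat.pred (length l))%coq_nat -> forall t,
     pos_Rl l i < t < pos_Rl l (S i) -> 0 <= t <= 1 /\ f t <= pos_Rl lf i) ->
  step_majorant lf l.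
Proof.
elim: lf l => [|c lf IH] [|x [|y s]] //= [len] H; split.
- by move=> t; apply: (H 0%nat); lia.
- apply: IH => [|i hi]; first by rewrite /= len.
  by apply: (H i.+1); simpl in *; lia.
Qed.

Lemma StepFun_step_majorant (u : StepFun 0 1) : (forall t, 0 <= t <= 1 -> f t <= u t) ->
  step_majorant (subdivision_val u) (subdivision u).
Proof.
move=> fu; have [ord [l0 [l1 [len u_cst]]]] := StepFun_P1 u.
apply: step_majorant_adapted => // i hi t ht.
have [le_pos _] := RList_P6 (subdivision u).
have := le_pos ord 0%nat i ltac:(lia) ltac:(lia).
have := le_pos ord i.+1 (Nat.pred (length (subdivision u))) ltac:(lia) ltac:(lia).
rewrite l0 l1 Rmin_left ?Rmax_right; try lra.
move=> ? ?; have t01 : 0 <= t <= 1 by lra.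
by split; last by rewrite -(u_cst i hi t ht); exact: fu.
Qed.

Lemma step_majorant_cover K {lf l} t : step_majorant lf l ->
  pos_Rl l 0 <= t <= pos_Rl l (Nat.pred (length l)) -> K < f t ->
  t \in l \/ step_superlevel K lf l t.
Proof.
elim: lf l => [|c lf IH] [|x [|y s]] //=.
  by move=> _ ht _; left; rewrite inE; apply/eqP; lra.
move=> [f_le maj] ht Kt.
have [tx|xt] := Rle_lt_dec t x.
  by left; rewrite inE; apply/orP; left; apply/eqP; lra.
have [ty|yt] := Rlt_le_dec t y.
  have [_ ftc] := f_le t (conj xt ty).
  have -> : (K < c)%R by apply/RltP; lra.
  right; left.
  by rewrite /= in_itv /=; apply/andP; split; apply/RltP.
have [|t_in|t_sup] := IH (y :: s) maj _ Kt; first by simpl; lra.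
  by left; rewrite inE t_in orbT.
by right; right.
Qed.

End step_lists.

Section Riemann.
Local Open Scope R_scope.

Lemma RiemannInt_SF_Int_SF a b (u : StepFun a b) : a <= b ->
  RiemannInt_SF u = Int_SF (subdivision_val u) (subdivision u).
Proof. by rewrite /RiemannInt_SF; case: Rle_dec. Qed.

(* Stdlib's integral is the limit of the integrals of step functions phi_n with
   |f - phi_n| <= psi_n and |∫ psi_n| < 1/n, so phi_n + psi_n is a step majorant
   of f whose integral tends to ∫ f. *)
Lemma le_RiemannInt_step_majorants f a b (pr : Riemann_integrable f a b) r : a <= b ->
  (forall u : StepFun a b, (forall t, a <= t <= b -> f t <= u t) -> r <= RiemannInt_SF u) ->
  r <= RiemannInt pr.
Proof.
move=> ab r_le; apply: Rnot_lt_le => lt_r.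
move: lt_r; rewrite /RiemannInt; case: RiemannInt_exists => I HI /= lt_r.
have eta_gt0 : 0 < (r - I) / 2 by lra.
have [N1 HN1] := HI _ eta_gt0.
have [N2 HN2] := RinvN_cv eta_gt0.
pose n := Nat.max N1 N2.
have [psi [f_psi psi_I]] := phi_sequence_prop RinvN pr n.
pose u := mkStepFun (StepFun_P28 1 (phi_sequence RinvN pr n) psi).
have u_maj : forall t, a <= t <= b -> f t <= u t.
  move=> t tab; rewrite Rmin_left ?Rmax_right // in f_psi.
  have := f_psi t tab; have := Rle_abs (f t - phi_sequence RinvN pr n t).
  rewrite /u /=; lra.
have := r_le u u_maj; rewrite StepFun_P30.
have := HN1 n ltac:(lia); have := HN2 n ltac:(lia); rewrite /R_dist Rminus_0_r.
have := Rle_abs (RiemannInt_SF (phi_sequence RinvN pr n) - I).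
have := Rle_abs (RiemannInt_SF psi); have := Rle_abs (RinvN n).
lra.
Qed.

End Riemann.

From mathcomp Require Import lra.

Notation mu := (@completed_lebesgue_measure R).
(* [R] with the sigma-algebra of Lebesgue measurable sets, the domain of [mu]. *)
Notation RLeb := (caratheodory_type (@wlength R idfun)^*%mu).

Lemma completed_measurable_itv (i : interval R) : measurable ([set` i] : set RLeb).
Proof. by apply: sub_caratheodory; exact: measurable_itv. Qed.

Lemma completed_lebesgue_measure_itv (i : interval R) :
  mu [set` i] = (if i.1 < i.2 then (i.2 : \bar R) - i.1 else 0)%E.
Proof. exact: lebesgue_measure_itv. Qed.

Lemma completed_lebesgue_measure_itv_oo (x y : R) : x <= y -> mu `]x, y[ = (y - x)%:E.
Proof.
rewrite completed_lebesgue_measure_itv /= lte_fin le_eqVlt => /orP[/eqP->|->//].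
by rewrite ltxx subrr.
Qed.

Fixpoint step_open (lf l : list R) (t : R) : R :=
  match lf, l with
  | c :: lf', x :: ((y :: _) as l') => (c * \1_`]x, y[ t + step_open lf' l' t)%R
  | _, _ => 0%R
  end.

Lemma measurable_step_open lf l :
  measurable_fun [set: RLeb] (step_open lf l : RLeb -> Real.sort R).
Proof.
elim: lf l => [|c lf IH] [|x [|y s]] /=; try exact: measurable_cst.
have mc : measurable_fun [set: RLeb] (fun t : RLeb => c * \1_`]x, y[ t : Real.sort R).
  apply: measurable_funM; first exact: measurable_cst.
  exact/measurable_indic/completed_measurable_itv.
exact: measurable_funD mc (IH _).
Qed.

Lemma step_open_ge0 (g : R -> R) lf l t :
  (forall c, 0 <= g c) -> 0 <= step_open (map g lf) l t.
Proof.
move=> g0; elim: lf l => [|c lf IH] [|x [|y s]] //=.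
by rewrite addr_ge0 ?mulr_ge0.
Qed.

Lemma integral_step_open (g : R -> R) lf l : (forall c, 0 <= g c) ->
  ordered_Rlist l ->
  (\int[mu]_t (step_open (map g lf) l t)%:E = (Int_SF (map g lf) l)%:E)%E.
Proof.
move=> g0; elim: lf l => [|c lf IH] [|x [|y s]] /=; try by rewrite integral0.
move=> /ordered_Rlist_cons[/RleP xy ord].
have mitv := completed_measurable_itv `]x, y[.
under eq_integral do rewrite EFinD.
rewrite ge0_integralD //; last 4 first.
- by move=> t _; rewrite lee_fin mulr_ge0.
- apply/measurable_EFinP/measurable_funM; first exact: measurable_cst.
  exact: measurable_indic.
- by move=> t _; rewrite lee_fin step_open_ge0.
- exact/measurable_EFinP/measurable_step_open.
rewrite IH //; under eq_integral do rewrite EFinM.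
rewrite ge0_integralZl_EFin //; last exact/measurable_EFinP/measurable_indic.
rewrite integral_indic // setIT.
by move: (completed_lebesgue_measure_itv_oo x y xy) => /= ->; rewrite -EFinM -EFinD.
Qed.

Lemma step_open_left lf y s t :
  ordered_Rlist (y :: s) -> t <= y -> step_open lf (y :: s) t = 0.
Proof.
elim: lf y s => [|c lf IH] y [|z s] //= /ordered_Rlist_cons[/RleP yz ord] ty.
rewrite IH ?(le_trans ty) // indicE memNset ?mulr0 ?addr0 //=.
by rewrite in_itv /= ltNge ty.
Qed.

Lemma step_open_cases f (g : R -> R) {lf l} t : ordered_Rlist l -> step_majorant f lf l ->
  step_open (map g lf) l t = 0 \/
  exists c, [/\ t \in `[0, 1], f t <= c & step_open (map g lf) l t = g c].
Proof.
elim: lf l => [|c lf IH] [|x [|y s]] //=; try by left.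
move=> /ordered_Rlist_cons[_ ord] [f_le maj]; rewrite indicE.
case: (boolP (t \in _)) => [|_]; last by rewrite mulr0 add0r; exact: IH.
rewrite inE /= in_itv /= => /andP[xt ty].
have [t01 ftc] := f_le t (conj (RltP xt) (RltP ty)).
right; exists c; split.
- by rewrite in_itv /=; apply/andP; split; apply/RleP; case: t01.
- exact/RleP.
- by rewrite mulr1 step_open_left ?addr0 // ltW.
Qed.

Lemma measure_step_superlevel K lf l : ordered_Rlist l ->
  (mu (step_superlevel K lf l) <= (Int_SF (map (Rgt_ind K) lf) l)%:E)%E.
Proof.
elim: lf l => [|c lf IH] [|x [|y s]] //=; try by rewrite measure0.
move=> /ordered_Rlist_cons[/RleP xy ord]; rewrite EFinD.
apply: le_trans (outer_measureU2 mu _ _) _; apply: leeD; last exact: IH.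
rewrite /Rgt_ind RmultE; case: (K < c); last by rewrite mul0r measure0.
by rewrite mul1r -(completed_lebesgue_measure_itv_oo x y xy).
Qed.

Lemma completed_lebesgue_measure_seq (s : seq R) : mu [set` s] = 0%E.
Proof.
exact/countable_lebesgue_measure0/finite_set_countable/finite_seq.
Qed.

(* No measurability is needed: the integral of a nonnegative function is the
   supremum of the integrals of its simple minorants. *)
Lemma ge0_le_integralT d (T : measurableType d) (nu : {measure set T -> \bar R})
    (h k : T -> \bar R) : (forall x, 0 <= h x)%E -> (forall x, h x <= k x)%E ->
  (\int[nu]_x h x <= \int[nu]_x k x)%E.
Proof.
move=> h0 hk; have k0 x : (0 <= k x)%E by exact: le_trans (h0 x) (hk x).
rewrite (ge0_integralTE nu h0) (ge0_integralTE nu k0).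
apply: le_ereal_sup => _ [s sh <-]; exists s => //= x.
exact: le_trans (sh x) (hk x).
Qed.

Lemma abse_integral_negset f :
  `| \int[mu]_(x in negset f) (f x)%:E |%E = (\int[mu]_(x in negset f) (- f x)%:E)%E.
Proof.
rewrite integralE.
have -> : (\int[mu]_(x in negset f) ((fun x => (f x)%:E)^\+ x) = 0)%E.
  apply: integral0_eq => x [_ fx0]; rewrite funeposE; apply/max_idPr.
  by rewrite lee_fin ltW.
rewrite sub0e abseN gee0_abs; last first.
  by apply: integral_ge0 => x _; rewrite funenegE le_max lexx orbT.
apply: eq_integral => x /[!inE] -[_ fx0]; rewrite funenegE; apply/max_idPl.
by rewrite lee_fin oppr_ge0 ltW.
Qed.

Lemma Int_SF_neg_le_integral_negset f lf l : ordered_Rlist l -> step_majorant f lf l ->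
  ((Int_SF (map (fun c => Rmax (- c) 0) lf) l)%:E <=
   \int[mu]_(x in negset f) (- f x)%:E)%E.
Proof.
move=> ord maj; have neg_ge0 c : 0 <= Rmax (- c) 0 by rewrite RmaxE le_max lexx orbT.
rewrite -integral_step_open // [in X in (_ <= X)%E]integral_mkcond.
apply: ge0_le_integralT => t; first by rewrite lee_fin step_open_ge0.
have patch_ge0 : (0 <= ((fun x => (- f x)%:E) \_ (negset f)) t)%E.
  by rewrite patchE; case: ifPn => // /[!inE] -[_ ft0]; rewrite lee_fin oppr_ge0 ltW.
have [->|[c [t01 ftc ->]]] := step_open_cases f (fun c => Rmax (- c) 0) t ord maj.
  exact: patch_ge0.
rewrite RmaxE; have [c0|c0] := leP 0 c.
  by rewrite (max_idPr _) ?oppr_le0.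
have ft0 : f t < 0 by exact: le_lt_trans c0.
rewrite patchE mem_set; last by split.
by rewrite RoppE (max_idPl _) ?lee_fin ?lerN2 // oppr_ge0 ltW.
Qed.

Definition sublevel01 (f : R -> R) (K : R) : set R :=
  [set x : R | x \in `[0%R, 1%R] /\ f x <= K].

Lemma measure_sublevel01_ge f K (u : StepFun 0 1) :
  (forall t, (0 <= t <= 1)%coqR -> (f t <= u t)%coqR) ->
  ((1 - Int_SF (map (Rgt_ind K) (subdivision_val u)) (subdivision u))%:E <=
   mu (sublevel01 f K))%E.
Proof.
move=> fu; set l := subdivision u; set lf := subdivision_val u.
have [ord [l0 [l1 _]]] := StepFun_P1 u.
have cover : `[0%R, 1%R] `<=` sublevel01 f K `|` ([set` l] `|` step_superlevel K lf l).
  move=> t t01; have [ftK|Kft] := leP (f t) K; first by left.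
  move: t01; rewrite /= in_itv /= => /andP[/RleP t0 /RleP t1].
  have := step_majorant_cover f K t (StepFun_step_majorant f u fu) _ (RltP Kft).
  rewrite -/l l0 l1 Rmin_left ?Rmax_right; try exact: Rle_0_1.
  by move=> /(_ (conj t0 t1)) [t_l|t_sup]; right; [left|right].
have : (1 <= mu (sublevel01 f K) + (Int_SF (map (Rgt_ind K) lf) l)%:E)%E.
  have := completed_lebesgue_measure_itv `[0%R, 1%R]; rewrite /= lte_fin ltr01 sube0 => <-.
  apply: le_trans (le_outer_measure mu _ _ cover) _.
  apply: le_trans (outer_measureU2 mu _ _) _; apply: leeD => //.
  apply: le_trans (outer_measureU2 mu _ _) _.
  rewrite [X in (X + _ <= _)%E](_ : _ = 0%E) ?add0e; last exact: completed_lebesgue_measure_seq.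
  exact: measure_step_superlevel.
by rewrite EFinB leeBlDr.
Qed.

Lemma step_majorant_bound f K (u : StepFun 0 1) : 0 <= K ->
  (forall t, (0 <= t <= 1)%coqR -> (f t <= u t)%coqR) ->
  ((K - RiemannInt_SF u)%:E <=
   K%:E * mu (sublevel01 f K) + `| \int[mu]_(x in negset f) (f x)%:E |)%E.
Proof.
move=> K0 fu; set l := subdivision u; set lf := subdivision_val u.
have [ord _] := StepFun_P1 u.
set B := Int_SF (map (Rgt_ind K) lf) l.
set P := Int_SF (map (fun c => Rmax c 0) lf) l.
set N := Int_SF (map (fun c => Rmax (- c) 0) lf) l.
have uE : RiemannInt_SF u = P - N.
  rewrite RiemannInt_SF_Int_SF; last exact: Rle_0_1.
  by rewrite Int_SF_pos_neg RminusE.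
have KB : K * B <= P.
  by apply/RleP; rewrite -RmultE; apply: Int_SF_Rgt_ind_le => //; exact/RleP.
have N_le := Int_SF_neg_le_integral_negset f lf l ord (StepFun_step_majorant f u fu).
apply: le_trans (_ : (K * (1 - B))%:E + N%:E <= _)%E.
  by rewrite -EFinD lee_fin uE; lra.
rewrite EFinM abse_integral_negset; apply: leeD => //.
by apply: lee_wpmul2l; [rewrite lee_fin | exact: measure_sublevel01_ge].
Qed.

Lemma le_RiemannInt_sublevel01 {f} (pr : Riemann_integrable f 0 1) {K m n} : 0 <= K ->
  (mu (sublevel01 f K) <= m%:E)%E ->
  (`| \int[mu]_(x in negset f) (f x)%:E | <= n%:E)%E ->
  K - K * m - n <= RiemannInt pr.
Proof.
move=> K0 muS_le N_le.
apply/RleP/le_RiemannInt_step_majorants; first exact: Rle_0_1.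
move=> u fu; apply/RleP; rewrite -lee_fin.
suff : ((K - RiemannInt_SF u)%:E <= (K * m + n)%:E)%E by rewrite !lee_fin; lra.
apply: le_trans (step_majorant_bound f K u K0 fu) _.
rewrite (EFinD (K * m)) EFinM; apply: leeD => //.
by apply: lee_wpmul2l; rewrite ?lee_fin.
Qed.

Lemma sublevel01_sub_levelsetU f L eps :
  sublevel01 f (L + eps) `<=` levelset f L eps `|` negset f.
Proof.
move=> x [x01 fx]; have [fx0|fx0] := ltP (f x) 0; [right | left]; split => //.
by rewrite in_itv /= fx0 fx.
Qed.

Theorem lemma3p14 (f : R -> R) (pr : Riemann_integrable f 0%R 1%R)
  (eps : R) (heps : 0 < eps) :
  let L : R := RiemannInt pr in
  (`| \int[@completed_lebesgue_measure R]_(x in negset f) (f x)%:E | >=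
     (eps / 2)%:E)%E
  \/
  (@completed_lebesgue_measure R (levelset f L eps `|` negset f) >=
     (eps / (2 * (L + eps)))%:E)%E.
Proof.
move=> L; set K := L + eps; set A := levelset f L eps `|` negset f.
have [K_le0|K_gt0] := leP K 0.
  right; apply: le_trans (measure_ge0 _ _); rewrite lee_fin.
  by apply: mulr_ge0_le0; [exact: ltW | rewrite invr_le0 mulr_ge0_le0].
have [|muA_lt] := leP (eps / (2 * K))%:E (mu A); first by right.
left; rewrite leNgt; apply/negP => N_lt.
set N := `| _ |%E in N_lt.
have muA_fin : mu A \is a fin_num by rewrite ge0_fin_numE // (lt_trans muA_lt) ?ltry.
have N_fin : N \is a fin_num by rewrite ge0_fin_numE ?abse_ge0 // (lt_trans N_lt) ?ltry.
set m := fine (mu A); set n := fine N.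
have muS_le : (mu (sublevel01 f K) <= m%:E)%E.
  by rewrite fineK //; exact: (le_outer_measure mu _ _ (sublevel01_sub_levelsetU f L eps)).
have N_le : (N <= n%:E)%E by rewrite fineK.
have := le_RiemannInt_sublevel01 pr (ltW K_gt0) muS_le N_le.
move: muA_lt N_lt; rewrite -(fineK muA_fin) -(fineK N_fin) !lte_fin -/m -/n.
by rewrite ltr_pdivlMr ?mulr_gt0 // /K -/L; nra.
Qed.
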